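(* Let $0<b<c$ and $x_1,\dots,x_T\in\mathbb{R}^d$. Define $D_0=\frac{bc}{c-b}I$ and $D_t=\big(D_{t-1}^{-1}+c^{-1}I\big)^{-1}+x_tx_t^\top$ for $t\ge1$. Then \[ \sum_{t=1}^T x_t^\top D_t^{-1}x_t\le \ln\Big|\tfrac1b D_T\Big|+c^{-1}\sum_{t=1}^T\mathrm{Tr}(D_{t-1}), \] where $|\cdot|$ denotes the determinant. *)

From mathcomp Require Import all_boot all_order all_algebra.
From mathcomp Require Import all_classical all_reals all_analysis.
Set Implicit Arguments. Unset Strict Implicit. Unset Printing Implicit Defensive.
Import Order.TTheory GRing.Theory Num.Theory.
Local Open Scope ring_scope.

Fixpoint Dmat (R : realType) (d : nat) (b c : R) (x : nat -> 'cV[R]_d) (t : nat)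
  : 'M[R]_d :=
  match t with
  | 0 => (b * c / (c - b))%:M
  | t'.+1 => invmx (invmx (Dmat b c x t') + c^-1%:M) + x t'.+1 *m (x t'.+1)^T
  end.

From mathcomp Require Import all_boot all_order all_algebra.
From mathcomp Require Import all_classical all_reals all_analysis.
From mathcomp.algebra_tactics Require Import ring lra.
Import Order.TTheory GRing.Theory Num.Theory.
Local Open Scope ring_scope.
Set Implicit Arguments. Unset Strict Implicit. Unset Printing Implicit Defensive.

(* Write A_t = (D_{t-1}^-1 + c^-1 I)^-1, so that D_t = A_t + x_t x_t^T, and
   q = x_t^T A_t^-1 x_t >= 0.  Sherman-Morrison and the matrix determinant lemma give
     x_t^T D_t^-1 x_t = q / (1 + q) <= ln (1 + q) = ln |D_t| - ln |A_t|,
   while ln |D_{t-1}| - ln |A_t| = ln |I + c^-1 D_{t-1}| <= c^-1 Tr D_{t-1} by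
   Hadamard's inequality and 1 + u <= e^u.  Summing telescopes, and |D_0| >= b^d
   because b c / (c - b) >= b. *)

Section RankOneUpdate.
Variable R : comUnitRingType.

Lemma mx11_mulmxE (A B : 'M[R]_1) : (A *m B) 0 0 = A 0 0 * B 0 0.
Proof. by rewrite mxE big_ord1. Qed.

(* Sylvester's identity det (1 + u y) = det (1 + y u), read off two block
   factorisations of [[1, -y], [u, 1]]. *)
Lemma det_1D_rank1 n (u : 'cV[R]_n) (y : 'rV[R]_n) :
  \det (1%:M + u *m y) = 1 + (y *m u) 0 0.
Proof.
pose M : 'M[R]_(1 + n) := block_mx 1%:M (- y) u 1%:M.
have lowM : block_mx 1%:M 0 (- u) 1%:M *m M = block_mx 1%:M (- y) 0 (1%:M + u *m y).
  rewrite /M mulmx_block !(mul1mx, mul0mx, mulmx1, addr0, add0r) mulNmx mulmxN opprK.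
  by rewrite addNr addrC.
have upM : block_mx 1%:M y 0 1%:M *m M = block_mx (1%:M + y *m u) 0 u 1%:M.
  by rewrite /M mulmx_block !(mul1mx, mul0mx, mulmx1, addr0, add0r) addNr.
have := congr1 determinant lowM; rewrite det_mulmx det_lblock det_ublock !det1 !mul1r.
move=> <-; have := congr1 determinant upM.
by rewrite det_mulmx det_ublock det_lblock !det1 !mul1r mulr1 det_mx11 !mxE => ->.
Qed.

Lemma det_add_rank1 n (A : 'M[R]_n) (u : 'cV[R]_n) (y : 'rV[R]_n) :
  A \in unitmx -> \det (A + u *m y) = \det A * (1 + (y *m invmx A *m u) 0 0).
Proof.
move=> uA; have -> : A + u *m y = A *m (1%:M + invmx A *m u *m y).
  by rewrite mulmxDr mulmx1 !mulmxA mulmxV // mul1mx.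
by rewrite det_mulmx det_1D_rank1 mulmxA.
Qed.

Definition schur n1 n2 (M : 'M[R]_(n1 + n2)) :=
  drsubmx M - dlsubmx M *m invmx (ulsubmx M) *m ursubmx M.

Lemma schur_elim n1 n2 (M : 'M[R]_(n1 + n2)) : ulsubmx M \in unitmx ->
  block_mx 1%:M 0 (- (dlsubmx M *m invmx (ulsubmx M))) 1%:M *m M
  = block_mx (ulsubmx M) (ursubmx M) 0 (schur M).
Proof.
move=> uA; rewrite -[X in _ *m X = _](submxK M) mulmx_block !(mul1mx, mul0mx, addr0) mulNmx.
by rewrite mulmxKV // addNr mulNmx addrC.
Qed.

Lemma det_schur n1 n2 (M : 'M[R]_(n1 + n2)) : ulsubmx M \in unitmx ->
  \det M = \det (ulsubmx M) * \det (schur M).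
Proof.
move=> uA; have := congr1 determinant (schur_elim uA).
by rewrite det_mulmx det_lblock !det1 mulr1 mul1r det_ublock.
Qed.

End RankOneUpdate.

Lemma sherman_morrison_quad (F : fieldType) n (A : 'M[F]_n) (x : 'cV[F]_n) :
  A \in unitmx -> 1 + (x^T *m invmx A *m x) 0 0 != 0 ->
  (x^T *m invmx (A + x *m x^T) *m x) 0 0
  = (x^T *m invmx A *m x) 0 0 / (1 + (x^T *m invmx A *m x) 0 0).
Proof.
set q := (x^T *m invmx A *m x) 0 0 => uA q1.
have uN : A + x *m x^T \in unitmx by rewrite unitmxE det_add_rank1 // unitfE mulf_neq0 // -unitfE.
have NAx : (A + x *m x^T) *m (invmx A *m x) = (1 + q) *: x.
  rewrite mulmxDl mulKVmx // -!mulmxA (mulmxA x^T) [x^T *m _ *m _]mx11_scalar.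
  by rewrite mul_mx_scalar scalerDl scale1r.
have Nx : invmx (A + x *m x^T) *m x = (1 + q)^-1 *: (invmx A *m x).
  by rewrite -[invmx A *m x](mulKmx uN) NAx -scalemxAr scalerA mulVf ?scale1r.
by rewrite -mulmxA Nx -scalemxAr mxE mulrC mulmxA.
Qed.

Section PositiveDefinite.
Variable R : realFieldType.

Definition posdef n (A : 'M[R]_n) :=
  A^T = A /\ forall u : 'cV[R]_n, u != 0 -> 0 < (u^T *m A *m u) 0 0.

Lemma posdef_quad_ge0 n (A : 'M[R]_n) (u : 'cV[R]_n) :
  posdef A -> 0 <= (u^T *m A *m u) 0 0.
Proof.
case=> _ pA; have [->|/pA /ltW //] := eqVneq u 0.
by rewrite trmx0 !mul0mx mxE.
Qed.

Lemma trmx_mul_self_gt0 n (u : 'cV[R]_n) : u != 0 -> 0 < (u^T *m u) 0 0.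
Proof.
move=> u0; have sq_ge0 (i : 'I_n) : true -> 0 <= u^T 0 i * u i 0.
  by move=> _; rewrite mxE -expr2 sqr_ge0.
rewrite mxE lt_def sumr_ge0 ?andbT //; apply: contra u0 => /eqP/(psumr_eq0P sq_ge0) u_eq0.
apply/eqP/matrixP=> i j; rewrite ord1 mxE.
by have /eqP := u_eq0 i isT; rewrite mxE -expr2 sqrf_eq0 => /eqP.
Qed.

Lemma posdef_scalar n (a : R) : 0 < a -> posdef (a%:M : 'M[R]_n).
Proof.
move=> a0; split=> [|u u0]; first exact: tr_scalar_mx.
by rewrite mul_mx_scalar -scalemxAl mxE mulr_gt0 // trmx_mul_self_gt0.
Qed.

Lemma posdefD n (A B : 'M[R]_n) : posdef A -> posdef B -> posdef (A + B).
Proof.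
move=> [sA pA] [sB pB]; split=> [|u u0]; first by rewrite raddfD /= sA sB.
by rewrite mulmxDr mulmxDl mxE addr_gt0 ?pA ?pB.
Qed.

Lemma posdefZ n a (A : 'M[R]_n) : 0 < a -> posdef A -> posdef (a *: A).
Proof.
move=> a0 [sA pA]; split=> [|u u0]; first by rewrite linearZ /= sA.
by rewrite -scalemxAr -scalemxAl mxE mulr_gt0 ?pA.
Qed.

Lemma posdefD_rank1 n (A : 'M[R]_n) (x : 'cV[R]_n) :
  posdef A -> posdef (A + x *m x^T).
Proof.
move=> [sA pA]; split=> [|u u0]; first by rewrite raddfD /= sA trmx_mul trmxK.
rewrite mulmxDr mulmxDl mxE ltr_wpDr ?pA // mulmxA -(mulmxA (u^T *m x)).
rewrite mx11_mulmxE -[x^T *m u]trmxK trmx_mul trmxK [X in _ * X]mxE -expr2.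
exact: sqr_ge0.
Qed.

Lemma posdef_unit n (A : 'M[R]_n) : posdef A -> A \in unitmx.
Proof.
move=> [_ pA]; rewrite unitmxE unitfE; apply/negP=> /det0P[v v0 vA].
by have := pA v^T; rewrite trmx_eq0 trmxK vA mul0mx mxE ltxx => /(_ v0).
Qed.

Lemma posdef_inv n (A : 'M[R]_n) : posdef A -> posdef (invmx A).
Proof.
move=> pdA; have uA := posdef_unit pdA; case: pdA => sA pA.
split=> [|u u0]; first by rewrite trmx_inv sA.
set w := invmx A *m u; have -> : u = A *m w by rewrite /w mulKVmx.
have w0 : w != 0 by apply: contra u0 => /eqP w0; rewrite -[u](mulKVmx uA) -/w w0 mulmx0.
by rewrite trmx_mul sA -!mulmxA mulKmx // mulmxA pA.
Qed.

Lemma posdef_diag_gt0 n (A : 'M[R]_n) i : posdef A -> 0 < A i i.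
Proof.
move=> [_ pA]; have := pA (delta_mx i 0); rewrite trmx_delta -rowE -colE !mxE; apply.
by apply: contraTneq isT => /matrixP/(_ i 0); rewrite !mxE !eqxx /= => /eqP; rewrite oner_eq0.
Qed.

Lemma posdef_congr n (P L : 'M[R]_n) :
  posdef P -> L \in unitmx -> posdef (L *m P *m L^T).
Proof.
move=> [sP pP] uL; split=> [|u u0]; first by rewrite !trmx_mul trmxK sP mulmxA.
have := pP (L^T *m u); rewrite trmx_mul trmxK !mulmxA; apply.
by apply: contra u0 => /eqP Lu0; rewrite -[u](mulKmx (_ : L^T \in unitmx)) ?Lu0 ?mulmx0 ?unitmx_tr.
Qed.

Section Blocks.
Variables (n1 n2 : nat) (M : 'M[R]_(n1 + n2)).
Hypothesis pM : posdef M.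

Lemma trmx_dlsubmx : (dlsubmx M)^T = ursubmx M.
Proof. by rewrite trmx_dlsub pM.1. Qed.

Lemma posdef_ulsubmx : posdef (ulsubmx M).
Proof.
case: pM => sM pMu; split=> [|w w0]; first by rewrite trmx_ulsub sM.
have := pMu (col_mx w 0); rewrite -{1}(submxK M) tr_col_mx trmx0 mul_row_block.
by rewrite mul_row_col !(mul0mx, mulmx0, addr0); apply; rewrite col_mx_eq0 negb_and w0.
Qed.

Lemma posdef_drsubmx : posdef (drsubmx M).
Proof.
case: pM => sM pMu; split=> [|w w0]; first by rewrite trmx_drsub sM.
have := pMu (col_mx 0 w); rewrite -{1}(submxK M) tr_col_mx trmx0 mul_row_block.
by rewrite mul_row_col !(mul0mx, mulmx0, add0r); apply; rewrite col_mx_eq0 negb_and w0 orbT.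
Qed.

End Blocks.

(* Congruence by the elimination matrix block-diagonalises M into diag(ulsubmx M, schur M). *)
Lemma posdef_schur n1 n2 (M : 'M[R]_(n1 + n2)) : posdef M -> posdef (schur M).
Proof.
move=> pM; have uA := posdef_unit (posdef_ulsubmx pM).
pose L : 'M[R]_(n1 + n2) := block_mx 1%:M 0 (- (dlsubmx M *m invmx (ulsubmx M))) 1%:M.
have uL : L \in unitmx by rewrite unitmxE det_lblock !det1 mulr1 unitr1.
have LML : L *m M *m L^T = block_mx (ulsubmx M) 0 0 (schur M).
  rewrite schur_elim // tr_block_mx !trmx1 trmx0 raddfN /= trmx_mul trmx_inv.
  rewrite trmx_ulsub pM.1 (trmx_dlsubmx pM) mulmx_block.
  by rewrite !(mulmx1, mulmx0, mul0mx, addr0, add0r) mulmxN mulKVmx // addNr.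
by have := posdef_drsubmx (posdef_congr pM uL); rewrite LML block_mxKdr.
Qed.

Lemma posdef_det_gt0 n (P : 'M[R]_n) : posdef P -> 0 < \det P.
Proof.
elim: n P => [|n IH] P pP; first by rewrite det_mx00.
have pP' : posdef (P : 'M[R]_(1 + n)) by [].
rewrite (det_schur (posdef_unit (posdef_ulsubmx pP'))) det_mx11.
by apply: mulr_gt0; [exact: posdef_diag_gt0 (posdef_ulsubmx pP') | exact/IH/posdef_schur].
Qed.

Lemma det_schur_le n (P : 'M[R]_(1 + n)) :
  posdef P -> \det (schur P) <= \det (drsubmx P).
Proof.
move=> pP; have pA := posdef_ulsubmx pP; have pD := posdef_drsubmx pP.
rewrite /schur -mulNmx det_add_rank1 ?posdef_unit // ler_piMr ?(ltW (posdef_det_gt0 pD)) //.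
rewrite mulmxN mulmxA mxE mx11_mulmxE gerDl oppr_le0 mulr_ge0 //.
  by rewrite -(trmx_dlsubmx pP); apply/posdef_quad_ge0/posdef_inv.
by apply/ltW/(posdef_diag_gt0 0 (posdef_inv pA)).
Qed.

Lemma hadamard n (P : 'M[R]_n) : posdef P -> \det P <= \prod_i P i i.
Proof.
elim: n P => [|n IH] P pP; first by rewrite det_mx00 big_ord0.
have pP' : posdef (P : 'M[R]_(1 + n)) by [].
rewrite (det_schur (posdef_unit (posdef_ulsubmx pP'))) det_mx11 big_ord_recl.
have -> : P ord0 ord0 = ulsubmx (P : 'M[R]_(1 + n)) 0 0 by rewrite !mxE; congr (P _ _); apply: val_inj.
rewrite ler_wpM2l ?(ltW (posdef_diag_gt0 0 (posdef_ulsubmx pP'))) //.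
apply: (le_trans (det_schur_le pP')); apply: le_trans (IH _ (posdef_drsubmx pP')) _.
by rewrite le_eqVlt; apply/orP; left; apply/eqP/eq_bigr=> i _; rewrite !mxE; congr (P _ _); apply: val_inj.
Qed.

End PositiveDefinite.

Section LogDet.
Variable R : realType.

Lemma div1D_le_ln1D (q : R) : -1 < q -> q / (1 + q) <= ln (1 + q).
Proof.
move=> q1; have q1_gt0 : 0 < 1 + q by lra.
have h : -1 < - (q / (1 + q)) by rewrite ltrN2 ltr_pdivrMr // mul1r; lra.
have := le_ln1Dx h; have -> : 1 - q / (1 + q) = (1 + q)^-1 by field; lra.
by rewrite lnV ?posrE //; lra.
Qed.

(* Hadamard's inequality followed by 1 + t <= e^t on each diagonal entry. *)
Lemma ln_det_1DZ_le n (a : R) (D : 'M[R]_n) : 0 < a -> posdef D ->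
  ln (\det (1%:M + a *: D)) <= a * \tr D.
Proof.
move=> a0 pD; have pE : posdef (1%:M + a *: D).
  by apply: posdefD; [exact: posdef_scalar | exact: posdefZ].
rewrite -[_ * \tr D]expRK ler_ln ?posrE ?expR_gt0 ?posdef_det_gt0 //.
apply: (le_trans (hadamard pE)); rewrite /mxtrace mulr_sumr expR_sum.
apply: ler_prod => i _; rewrite !mxE eqxx mulr1n expR_ge1Dx andbT.
by rewrite addr_ge0 ?mulr_ge0 ?(ltW a0) ?(ltW (posdef_diag_gt0 i pD)).
Qed.

Lemma ln_det_add_rank1 n (A : 'M[R]_n) (x : 'cV[R]_n) : posdef A ->
  (x^T *m invmx (A + x *m x^T) *m x) 0 0 <= ln (\det (A + x *m x^T)) - ln (\det A).
Proof.
move=> pA; have uA := posdef_unit pA.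
have q0 : 0 <= (x^T *m invmx A *m x) 0 0 by apply/posdef_quad_ge0/posdef_inv.
rewrite sherman_morrison_quad ?lt0r_neq0 ?ltr_wpDr //.
rewrite -{1}[x]trmxK det_add_rank1 // trmxK lnM ?posrE ?posdef_det_gt0 ?ltr_wpDr //.
by rewrite addrAC subrr add0r div1D_le_ln1D // (lt_le_trans _ q0) // ltrN10.
Qed.

Definition forget (c : R) n (D : 'M[R]_n) := invmx (invmx D + c^-1%:M).

Lemma posdef_forget c n (D : 'M[R]_n) : 0 < c -> posdef D -> posdef (forget c D).
Proof.
move=> c0 pD; apply/posdef_inv/posdefD; first exact: posdef_inv.
by apply: posdef_scalar; rewrite invr_gt0.
Qed.

Lemma ln_det_forget_le c n (D : 'M[R]_n) : 0 < c -> posdef D ->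
  ln (\det D) - ln (\det (forget c D)) <= c^-1 * \tr D.
Proof.
move=> c0 pD; have pB : posdef (invmx D + c^-1%:M).
  by apply: posdefD; [exact: posdef_inv | apply: posdef_scalar; rewrite invr_gt0].
rewrite /forget det_inv lnV ?posrE ?posdef_det_gt0 // opprK addrC -lnM ?posrE ?posdef_det_gt0 //.
rewrite -det_mulmx mulmxDl mulVmx ?posdef_unit // mul_scalar_mx.
by rewrite ln_det_1DZ_le ?invr_gt0.
Qed.

End LogDet.

Lemma ln_detZ (R : realType) n (a : R) (A : 'M[R]_n) : 0 < a -> 0 < \det A ->
  ln (\det (a *: A)) = ln a *+ n + ln (\det A).
Proof. by move=> a0 dA; rewrite detZ lnM ?posrE ?exprn_gt0 // lnXn. Qed.

Section ForgettingRecursion.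
Variables (R : realType) (d : nat) (b c : R) (x : nat -> 'cV[R]_d).
Hypotheses (hb : 0 < b) (hbc : b < c).

Let c_gt0 : 0 < c. Proof. exact: lt_trans hbc. Qed.

Let Dmat0_scalar_ge : b <= b * c / (c - b).
Proof.
rewrite ler_pdivlMr ?subr_gt0 //; have : 0 < b * b by exact: mulr_gt0.
lra.
Qed.

Let Dmat0_scalar_gt0 : 0 < b * c / (c - b).
Proof. exact: lt_le_trans Dmat0_scalar_ge. Qed.

Lemma posdef_Dmat t : posdef (Dmat b c x t).
Proof.
elim: t => [|t IH] /=; last exact/posdefD_rank1/posdef_forget.
exact: posdef_scalar.
Qed.

Lemma quad_Dmat_le t :
  ((x t.+1)^T *m invmx (Dmat b c x t.+1) *m x t.+1) 0 0
  <= ln (\det (Dmat b c x t.+1)) - ln (\det (Dmat b c x t)) + c^-1 * \tr (Dmat b c x t).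
Proof.
have := ln_det_add_rank1 (x t.+1) (posdef_forget c_gt0 (posdef_Dmat t)).
have := ln_det_forget_le c_gt0 (posdef_Dmat t).
rewrite /forget /=; lra.
Qed.

Lemma sum_quad_Dmat_le T :
  \sum_(1 <= t < T.+1) ((x t)^T *m invmx (Dmat b c x t) *m x t) 0 0
  <= ln (\det (Dmat b c x T)) - ln (\det (Dmat b c x 0))
     + c^-1 * \sum_(1 <= t < T.+1) \tr (Dmat b c x t.-1).
Proof.
elim: T => [|T IH]; first by rewrite !big_geq // mulr0 addr0 subrr.
rewrite !(big_nat_recr T.+1 1) //=; have := quad_Dmat_le T.
by rewrite mulrDr; lra.
Qed.

Lemma ln_det_Dmat0_ge : ln b *+ d <= ln (\det (Dmat b c x 0)).
Proof.
by rewrite /= det_scalar lnXn // lerMn2r ler_ln ?posrE ?Dmat0_scalar_ge ?orbT.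
Qed.

End ForgettingRecursion.

Unset Implicit Arguments.

Theorem lemma5 (R : realType) (d T : nat) (b c : R) (x : nat -> 'cV[R]_d)
  (hb : 0 < b) (hbc : b < c) :
  \sum_(1 <= t < T.+1) ((x t)^T *m invmx (Dmat b c x t) *m x t) 0 0
  <= ln (\det (b^-1 *: Dmat b c x T))
     + c^-1 * \sum_(1 <= t < T.+1) \tr (Dmat b c x t.-1).
Proof.
apply: le_trans (sum_quad_Dmat_le x hb hbc T) _.
rewrite ln_detZ ?invr_gt0 //; last exact/posdef_det_gt0/posdef_Dmat.
rewrite lnV ?posrE // mulNrn.
have := ln_det_Dmat0_ge x hb hbc; lra.
Qed.
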